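(* Let $A\in\mathbb{C}^{n\times n}$, and fix $A^-\in A\{1\}$ and $A^{GD}\in A\{GD\}$. For $X\in\mathbb{C}^{n\times n}$ the following are equivalent: (i) $X = A^{-}AA^{GD}$; (ii) $XAX=X$, $R(X)=R(A^{-}A)$, and $N(X)=N(AA^{GD})$; (iii) $XAX=X$, $XA=A^{-}A$, and $AX=AA^{GD}$.
   Context: For $A\in\mathbb{C}^{n\times n}$, $ind(A)$ is the smallest nonnegative integer $k$ with $\mathrm{rank}(A^k)=\mathrm{rank}(A^{k+1})$. $A\{1\}$ is the set of matrices $X$ with $AXA=A$. With $k=ind(A)$, $A\{GD\}$ is the set of G-Drazin inverses of $A$: matrices $X$ with $AXA=A$, $XA^{k+1}=A^k$, $A^{k+1}X=A^k$. $R(\cdot)$, $N(\cdot)$ denote range and null space. *)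

From HB Require Import structures.
From mathcomp Require Import all_boot all_order all_algebra.
From mathcomp Require Import complex.
Set Implicit Arguments. Unset Strict Implicit. Unset Printing Implicit Defensive.
Import GRing.Theory Num.Theory.
Local Open Scope ring_scope.

Section Defs.
Variables (F : fieldType) (n : nat).

Definition ind_pred (A : 'M[F]_n) : pred nat :=
  fun k => \rank (A ^+ k) == \rank (A ^+ k.+1).

Lemma ind_ex (A : 'M[F]_n) : exists k, ind_pred A k.
Proof.
have dec : forall k, (\rank (A ^+ k.+1) <= \rank (A ^+ k))%N.
  by move=> k; rewrite exprSr mxrankM_maxl.
case: (boolP [exists k : 'I_n.+1, ind_pred A k]).
  by move/existsP=> [k Hk]; exists k.
move/existsPn=> H; exfalso.
have: forall k, (k <= n.+1)%N -> (\rank (A ^+ k) + k <= n)%N.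
  elim=> [|k IH] Hk; first by rewrite addn0 rank_leq_row.
  have := H (Ordinal Hk); rewrite /ind_pred /= => Hne.
  have Hlt : (\rank (A ^+ k.+1) < \rank (A ^+ k))%N.
    by rewrite ltn_neqAle eq_sym Hne dec.
  have := IH (ltnW Hk); rewrite addnS; apply: leq_trans; rewrite ltn_add2r.
  exact: Hlt.
by move/(_ n.+1 (leqnn _)); rewrite addnS ltnNge leq_addl.
Qed.

Definition ind (A : 'M[F]_n) : nat := ex_minn (ind_ex A).

Definition inner_inverse (A X : 'M[F]_n) : Prop := A *m X *m A = A.

Definition GD_inverse (A X : 'M[F]_n) : Prop :=
  [/\ A *m X *m A = A,
      X *m A ^+ (ind A).+1 = A ^+ (ind A) &
      A ^+ (ind A).+1 *m X = A ^+ (ind A)].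

Definition range (M : 'M[F]_n) : 'cV[F]_n -> Prop :=
  fun v => exists w : 'cV[F]_n, v = M *m w.
Definition nullsp (M : 'M[F]_n) : 'cV[F]_n -> Prop :=
  fun v => M *m v = 0.

Definition set_eq (P Q : 'cV[F]_n -> Prop) : Prop := forall v, P v <-> Q v.

End Defs.

From HB Require Import structures.
From mathcomp Require Import all_boot all_order all_algebra.
From mathcomp Require Import complex.

Set Implicit Arguments.
Unset Strict Implicit.
Unset Printing Implicit Defensive.

Import GRing.Theory.
Local Open Scope ring_scope.
Local Open Scope complex_scope.

(** Both directions rest on the outer-inverse identity
    [X = X A X]: it shows that [X] and [X A] have the same range and [X] and
    [A X] the same null space, and conversely the range and null space
    conditions pin down the idempotents [X A] and [A X]. *)

Lemma mulmx_cV_ext (F : fieldType) (n : nat) (B C : 'M[F]_n) :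
  (forall v : 'cV[F]_n, B *m v = C *m v) -> B = C.
Proof.
move=> BC; apply/matrixP => i j.
have := congr1 (fun M : 'cV[F]_n => M i 0) (BC (delta_mx j 0)).
by rewrite -!colE !mxE.
Qed.

Section OuterInverse.

Variables (F : fieldType) (n : nat) (A X : 'M[F]_n).
Hypothesis XAX : X *m A *m X = X.

Lemma range_outer_mulmxr : set_eq (range X) (range (X *m A)).
Proof.
move=> v; split; case=> w ->.
  by exists (X *m w); rewrite -{1}XAX mulmxA.
by exists (A *m w); rewrite mulmxA.
Qed.

Lemma nullsp_outer_mulmxl : set_eq (nullsp X) (nullsp (A *m X)).
Proof.
move=> v; rewrite /nullsp; split => [Xv0 | AXv0].
  by rewrite -mulmxA Xv0 mulmx0.
by rewrite -XAX -!mulmxA (mulmxA A) AXv0 mulmx0.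
Qed.

Lemma outer_fix_range (P : 'M[F]_n) :
  (forall v, range P v -> range X v) -> X *m A *m P = P.
Proof.
move=> sPX; apply: mulmx_cV_ext => v; rewrite -mulmxA.
have [w ->] : range X (P *m v) by apply: sPX; exists v.
by rewrite mulmxA XAX.
Qed.

Lemma outer_fix_nullsp (Q : 'M[F]_n) :
  (forall v, nullsp X v -> nullsp Q v) -> Q *m A *m X = Q.
Proof.
move=> sXQ; apply: mulmx_cV_ext => v.
have /eqP : nullsp Q (v - A *m X *m v).
  by apply: sXQ; rewrite /nullsp mulmxBr !mulmxA XAX subrr.
by rewrite mulmxBr subr_eq0 !mulmxA => /eqP <-.
Qed.

End OuterInverse.

Section InnerInverses.

Variables (F : fieldType) (n : nat) (A Am G : 'M[F]_n).
Hypotheses (AAmA : A *m Am *m A = A) (AGA : A *m G *m A = A).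

Lemma inners_mulmxr : Am *m A *m G *m A = Am *m A.
Proof. by rewrite -!mulmxA (mulmxA A) AGA. Qed.

Lemma inners_mulmxl : A *m (Am *m A *m G) = A *m G.
Proof. by rewrite !mulmxA AAmA. Qed.

Lemma inners_outer : Am *m A *m G *m A *m (Am *m A *m G) = Am *m A *m G.
Proof. by rewrite inners_mulmxr -mulmxA inners_mulmxl mulmxA. Qed.

Lemma inners_outer_idempotentsP (X : 'M[F]_n) :
  X = Am *m A *m G <->
  [/\ X *m A *m X = X, X *m A = Am *m A & A *m X = A *m G].
Proof.
split=> [-> | [XAX XA AX]].
  by split; [exact: inners_outer | exact: inners_mulmxr | exact: inners_mulmxl].
by rewrite -XAX XA -mulmxA AX mulmxA.
Qed.

Lemma outer_range_nullspP (X : 'M[F]_n) :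
  [/\ X *m A *m X = X, set_eq (range X) (range (Am *m A))
    & set_eq (nullsp X) (nullsp (A *m G))] <->
  [/\ X *m A *m X = X, X *m A = Am *m A & A *m X = A *m G].
Proof.
split=> [[XAX rX nX] | [XAX XA AX]]; split=> //.
- have <- : X *m A *m (Am *m A) = Am *m A.
    by apply: outer_fix_range => // v /rX.
  by rewrite -!mulmxA (mulmxA A) AAmA.
- have <- : A *m G *m A *m X = A *m G.
    by apply: outer_fix_nullsp => // v /nX.
  by rewrite AGA.
- by rewrite -XA; apply: range_outer_mulmxr.
- by rewrite -AX; apply: nullsp_outer_mulmxl.
Qed.

End InnerInverses.

Theorem theorem3p7 (R : rcfType) (n : nat) (A Am AGD X : 'M[R[i]]_n) :
  inner_inverse A Am -> GD_inverse A AGD ->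
  [/\ (X = Am *m A *m AGD) <->
        [/\ X *m A *m X = X,
            set_eq (range X) (range (Am *m A)) &
            set_eq (nullsp X) (nullsp (A *m AGD))],
      (X = Am *m A *m AGD) <->
        [/\ X *m A *m X = X, X *m A = Am *m A & A *m X = A *m AGD] &
      [/\ X *m A *m X = X,
            set_eq (range X) (range (Am *m A)) &
            set_eq (nullsp X) (nullsp (A *m AGD))] <->
        [/\ X *m A *m X = X, X *m A = Am *m A & A *m X = A *m AGD]].
Proof.
move=> AAmA [AGA _ _].
have i_iii := inners_outer_idempotentsP AAmA AGA X.
have ii_iii := outer_range_nullspP AAmA AGA X.
by split; [apply: iff_trans i_iii (iff_sym ii_iii) | |].
Qed.
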